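(* Let $\kappa$ be an algebraically closed field of characteristic zero, complete for a non-trivial non-Archimedean absolute value. Let $a,b\in\kappa$ with $a\ne0$ and $|a|\le1$, and let $L(z)=az+b$. Let $f\in\mathcal{A}(\kappa)$ be an entire function, not identically zero, and let $m$ be a positive integer. Then for every $r>|b|/|a|$, $$\mu(r,f\circ L)\le\mu(r,f),\qquad \mu\!\left(r,\frac{f\circ L}{f}\right)\le1,\qquad \mu\!\left(r,\frac{\Delta_L^mf}{f}\right)\le1.$$
   Context: $\mathcal{A}(\kappa)$ is the ring of entire functions over $\kappa$: power series $\sum_{n\ge0}a_nz^n$ with $a_n\in\kappa$ converging on all of $\kappa$. For such $g$, $\mu(r,g)=\max_n|a_n|r^n$; for a meromorphic $g/h$ ($g,h$ entire, $h\not\equiv0$), $\mu(r,g/h)=\mu(r,g)/\mu(r,h)$. The difference operators are $\Delta_Lf=f\circ L-f$ and $\Delta_L^mf=\Delta_L(\Delta_L^{m-1}f)$ (with $\Delta_L^1=\Delta_L$). *)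

From HB Require Import structures.
From mathcomp Require Import all_boot all_order all_algebra.
From mathcomp Require Import boolp classical_sets reals.
Set Implicit Arguments. Unset Strict Implicit. Unset Printing Implicit Defensive.
Import Order.TTheory GRing.Theory Num.Theory.
Local Open Scope ring_scope.
Local Open Scope classical_set_scope.

Section Defs.
Variables (K : fieldType) (R : realType) (abs : K -> R).

Definition nonarch_abs : Prop :=
  [/\ forall x, 0 <= abs x,
      forall x, abs x = 0 <-> x = 0,
      forall x y, abs (x * y) = abs x * abs y &
      forall x y, abs (x + y) <= Num.max (abs x) (abs y)].

Definition nontrivial_abs : Prop := exists x, abs x != 0 /\ abs x != 1.

Definition complete_abs : Prop :=
  forall u : nat -> K,
    (forall e : R, 0 < e -> exists N, forall m n, (N <= m)%N -> (N <= n)%N ->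
        abs (u m - u n) < e) ->
    exists l, forall e : R, 0 < e -> exists N, forall n, (N <= n)%N ->
        abs (u n - l) < e.

Definition series_sums (u : nat -> K) (s : K) : Prop :=
  forall e : R, 0 < e -> exists N, forall M, (N <= M)%N ->
    abs (\sum_(i < M) u i - s) < e.

Definition coef_rep (c : nat -> K) (g : K -> K) : Prop :=
  forall z, series_sums (fun n => c n * z ^+ n) (g z).

Definition entire (g : K -> K) : Prop := exists c, coef_rep c g.

(* mu(r, g) = max_n |c_n| r^n, c the coefficients of g.  (The coefficients
   of an entire function are unique, so taking the supremum over all
   representing coefficient sequences is the same as using "the" one.) *)
Definition mu (r : R) (g : K -> K) : R :=
  sup [set x : R | exists (c : nat -> K) (n : nat),
                     coef_rep c g /\ x = abs (c n) * r ^+ n].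

(* mu of a meromorphic quotient g/h: mu(r, g/h) = mu(r, g) / mu(r, h) *)
Definition mu_quot (r : R) (g h : K -> K) : R := mu r g / mu r h.
End Defs.

Definition DeltaL (K : fieldType) (L : K -> K) (f : K -> K) : K -> K :=
  fun z => f (L z) - f z.
Definition DeltaLn (K : fieldType) (L : K -> K) (m : nat) (f : K -> K) :=
  iter m (DeltaL L) f.

From HB Require Import structures.
From mathcomp Require Import all_boot all_order all_algebra.
From mathcomp Require Import boolp classical_sets reals.
From mathcomp Require Import ring lra.
Import Order.TTheory GRing.Theory Num.Theory.
Local Open Scope ring_scope.

(* If f = sum_n c_n z^n, the coefficient of z^k in f (a z + b) is
   d_k = sum_n 'C(n, k) c_n a^k b^(n - k), a series that converges because
   the field is complete and c_n w^n -> 0 for every w.  The ultrametric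
   inequality gives |d_k| r^k <= sup_n |c_n| (|a| r)^k |b|^(n - k), which is
   at most sup_n |c_n| r^n = mu(r, f) since |a| <= 1 and |b| <= r.  The same
   bound on the coefficients d_k - c_k of Delta_L f gives
   mu(r, Delta_L f) <= mu(r, f), and iterating handles Delta_L^m f.
   Nontriviality of the absolute value makes the coefficients of an entire
   function unique, so that mu is computed from any representation. *)

Set Implicit Arguments. Unset Strict Implicit.

Section Ultrametric.
Variables (K : fieldType) (R : realType) (abs : K -> R).
Hypothesis habs : nonarch_abs abs.

Lemma abs_ge0 x : 0 <= abs x. Proof. by case: habs. Qed.
Lemma abs_eq0 x : abs x = 0 <-> x = 0. Proof. by case: habs. Qed.
Lemma absM x y : abs (x * y) = abs x * abs y. Proof. by case: habs. Qed.
Lemma abs_add_max x y : abs (x + y) <= Num.max (abs x) (abs y).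
Proof. by case: habs. Qed.

Lemma abs0 : abs 0 = 0. Proof. exact/abs_eq0. Qed.

Lemma abs_gt0 x : (0 < abs x) = (x != 0).
Proof. by rewrite lt_def abs_ge0 andbT; congr negb; apply/eqP/eqP => /abs_eq0. Qed.

Lemma abs1 : abs 1 = 1.
Proof.
have abs1_neq0 : abs 1 != 0 by rewrite lt0r_neq0 // abs_gt0 oner_neq0.
by apply: (mulfI abs1_neq0); rewrite -absM !mulr1.
Qed.

Lemma absN x : abs (- x) = abs x.
Proof.
suff absN1 : abs (-1) = 1 by rewrite -mulN1r absM absN1 mul1r.
have /eqP := absM (-1) (-1); rewrite mulrNN mulr1 abs1 eq_sym -expr2 sqrf_eq1.
case/orP=> /eqP // absN1; by have := abs_ge0 (-1); rewrite absN1 ler0N1.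
Qed.

Lemma abs_distC x y : abs (x - y) = abs (y - x).
Proof. by rewrite -absN opprB. Qed.

Lemma absX x n : abs (x ^+ n) = abs x ^+ n.
Proof. by elim: n => [|n IH]; rewrite ?expr0 ?abs1 // !exprS absM IH. Qed.

Lemma absV x : abs x^-1 = (abs x)^-1.
Proof.
have [->|x_neq0] := eqVneq x 0; first by rewrite invr0 abs0 invr0.
have absx_neq0 : abs x != 0 by rewrite lt0r_neq0 // abs_gt0.
by apply: (mulfI absx_neq0); rewrite -absM !mulfV // abs1.
Qed.

Lemma abs_add_le x y B : abs x <= B -> abs y <= B -> abs (x + y) <= B.
Proof. by move=> hx hy; apply: le_trans (abs_add_max x y) _; rewrite ge_max hx hy. Qed.

Lemma abs_sub_max x y z : abs (x - z) <= Num.max (abs (x - y)) (abs (y - z)).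
Proof. by have := abs_add_max (x - y) (y - z); rewrite addrA subrK. Qed.

Lemma abs_sum_le (I : Type) (s : seq I) (P : pred I) (F : I -> K) B :
  0 <= B -> (forall i, P i -> abs (F i) <= B) -> abs (\sum_(i <- s | P i) F i) <= B.
Proof.
move=> B_ge0 hF; apply: (big_ind (fun x => abs x <= B)) => //.
- by rewrite abs0.
- by move=> x y; apply: abs_add_le.
Qed.

Lemma abs_sum_lt (I : Type) (s : seq I) (P : pred I) (F : I -> K) B :
  0 < B -> (forall i, P i -> abs (F i) < B) -> abs (\sum_(i <- s | P i) F i) < B.
Proof.
move=> B_gt0 hF; apply: (big_ind (fun x => abs x < B)) => //.
- by rewrite abs0.
- by move=> x y hx hy; apply: le_lt_trans (abs_add_max x y) _; rewrite gt_max hx hy.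
Qed.

Lemma abs_natr_le1 n : abs (n%:R : K) <= 1.
Proof.
elim: n => [|n IH]; first by rewrite abs0.
by rewrite -natr1; apply: abs_add_le; rewrite ?abs1.
Qed.

Lemma abs_mulrn_le x n : abs (x *+ n) <= abs x.
Proof. by rewrite -mulr_natr absM ler_piMr ?abs_ge0 ?abs_natr_le1. Qed.

Lemma abs_add_eq x y : abs y < abs x -> abs (x + y) = abs x.
Proof.
move=> lt_yx; apply/eqP; rewrite eq_le; apply/andP; split.
  by apply: abs_add_le => //; apply: ltW.
have := abs_add_max (x + y) (- y); rewrite addrK absN le_max => /orP[-> //|le_xy].
by have := le_lt_trans le_xy lt_yx; rewrite ltxx.
Qed.

Lemma abs_sum_dominant M (F : 'I_M -> K) j :
  (forall i, i != j -> abs (F i) < abs (F j)) -> abs (\sum_i F i) = abs (F j).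
Proof.
move=> dom; rewrite (bigD1 j) //=.
have [Fj_le0|Fj_gt0] := leP (abs (F j)) 0.
  have : abs (\sum_(i | i != j) F i) <= 0.
    by apply: abs_sum_le => // i /dom /ltW /le_trans; apply.
  by rewrite le_eqVlt ltNge abs_ge0 orbF => /eqP /abs_eq0 ->; rewrite addr0.
by apply: abs_add_eq; apply: abs_sum_lt.
Qed.

End Ultrametric.

Lemma bernoulli_le (R : realFieldType) (q : R) n :
  0 <= q -> 1 + n%:R * q <= (1 + q) ^+ n.
Proof.
move=> q_ge0; elim: n => [|n IH]; first by rewrite mul0r addr0 expr0.
rewrite exprS -natr1.
have nq_ge0 : 0 <= n%:R * q by apply: mulr_ge0.
have nqq_ge0 : 0 <= n%:R * q * q by apply: mulr_ge0.
have : (1 + q) * (1 + n%:R * q) <= (1 + q) * (1 + q) ^+ n.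
  by apply: ler_wpM2l => //; lra.
nra.
Qed.

Lemma sum_ord_cat (V : nmodType) (F : nat -> V) m n : (m <= n)%N ->
  \sum_(i < n) F i = \sum_(i < m) F i + \sum_(m <= i < n) F i.
Proof. by move=> le_mn; rewrite -!(big_mkord xpredT) (big_cat_nat (leq0n m) le_mn). Qed.

Section Series.
Variables (K : fieldType) (R : realType) (abs : K -> R).
Hypothesis habs : nonarch_abs abs.

Definition null_seq (u : nat -> K) :=
  forall e : R, 0 < e -> exists N, forall n, (N <= n)%N -> abs (u n) < e.

Lemma series_sums_null u s : series_sums abs u s -> null_seq u.
Proof.
move=> hs e e_gt0; have [N HN] := hs e e_gt0; exists N => n le_Nn.
have -> : u n = \sum_(i < n.+1) u i - \sum_(i < n) u i.
  by rewrite big_ord_recr /= addrAC subrr add0r.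
apply: le_lt_trans (abs_sub_max habs _ s _) _; rewrite gt_max.
by rewrite HN 1?leqW // (abs_distC habs) HN.
Qed.

Lemma null_seq_bounded u : null_seq u -> exists2 B, 0 <= B & forall n, abs (u n) <= B.
Proof.
move=> hu; have [N HN] := hu 1 ltr01.
have sum_ge0 : 0 <= \sum_(i < N) abs (u i) by apply: sumr_ge0 => i _; apply: abs_ge0.
exists (\sum_(i < N) abs (u i) + 1) => [|n]; first exact: addr_ge0.
have [lt_nN|le_Nn] := ltnP n N.
  rewrite (bigD1 (Ordinal lt_nN)) //= -addrA lerDl addr_ge0 //.
  by apply: sumr_ge0 => i _; apply: abs_ge0.
by apply: ltW; apply: lt_le_trans (HN n le_Nn) _; rewrite lerDr.
Qed.

Lemma series_tail_le u s N eps : series_sums abs u s -> 0 <= eps ->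
  (forall n, (N <= n)%N -> abs (u n) <= eps) -> abs (s - \sum_(i < N) u i) <= eps.
Proof.
move=> hs eps_ge0 hu; apply/ler_addgt0Pr => e e_gt0.
have [M0 HM] := hs e e_gt0; pose M := maxn M0 N.
apply: le_trans (abs_sub_max habs s (\sum_(i < M) u i) _) _; rewrite ge_max.
apply/andP; split.
  by rewrite (abs_distC habs) ltW // (lt_le_trans (HM M (leq_maxl _ _))) // lerDr.
rewrite (sum_ord_cat _ (leq_maxr M0 N)) addrC addKr.
apply: le_trans (_ : eps <= eps + e); last by rewrite lerDl ltW.
rewrite big_nat_cond; apply: (abs_sum_le habs) => // i /andP[/andP[le_Ni _] _].
exact: hu.
Qed.

Lemma series_sumsMr u s y :
  series_sums abs u s -> series_sums abs (fun n => u n * y) (s * y).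
Proof.
move=> hs e e_gt0.
have y1_gt0 : 0 < abs y + 1 by apply: ltr_wpDl; rewrite ?abs_ge0.
have [N HN] := hs (e / (abs y + 1)) (divr_gt0 e_gt0 y1_gt0); exists N => M le_NM.
rewrite -mulr_suml -mulrBl (absM habs).
apply: le_lt_trans (_ : abs (\sum_(i < M) u i - s) * (abs y + 1) < e).
  by rewrite ler_wpM2l ?abs_ge0 ?lerDl.
by rewrite -ltr_pdivlMr // HN.
Qed.

Lemma series_sumsB u v s t : series_sums abs u s -> series_sums abs v t ->
  series_sums abs (fun n => u n - v n) (s - t).
Proof.
move=> hu hv e e_gt0; have [N1 H1] := hu e e_gt0; have [N2 H2] := hv e e_gt0.
exists (maxn N1 N2) => M; rewrite geq_max => /andP[le_N1M le_N2M].
rewrite sumrB (_ : _ - _ - _ = (\sum_(i < M) u i - s) - (\sum_(i < M) v i - t)).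
  by apply: le_lt_trans (abs_sub_max habs _ 0 _) _; rewrite subr0 sub0r (absN habs) gt_max H1 ?H2.
by rewrite opprB; ring.
Qed.

Hypothesis hcomp : complete_abs abs.

Lemma null_seq_series u : null_seq u -> exists s, series_sums abs u s.
Proof.
move=> hu; apply: hcomp => e e_gt0.
have [N HN] := hu e e_gt0; exists N.
suff partial_close m n : (N <= m)%N -> (m <= n)%N ->
    abs (\sum_(i < m) u i - \sum_(i < n) u i) < e.
  move=> m n le_Nm le_Nn; have [le_mn|lt_nm] := leqP m n; first exact: partial_close.
  by rewrite (abs_distC habs) partial_close // ltnW.
move=> le_Nm le_mn; rewrite (sum_ord_cat _ le_mn) opprD addNKr (absN habs).
rewrite big_nat_cond; apply: (abs_sum_lt habs) => // i /andP[/andP[le_mi _] _].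
by apply: HN; apply: leq_trans le_mi.
Qed.

End Series.

Section Nontrivial.
Variables (K : fieldType) (R : realType) (abs : K -> R).
Hypotheses (habs : nonarch_abs abs) (hnt : nontrivial_abs abs).

Lemma abs_unbounded (x : R) : exists w, x <= abs w.
Proof.
have [y [y_neq0 y_neq1]] := hnt.
have [z z_gt1] : exists z, 1 < abs z.
  have y_gt0 : 0 < abs y by rewrite lt_def y_neq0 abs_ge0.
  case: (ltrgtP (abs y) 1) => [y_lt1|y_gt1|y_eq1]; last by rewrite y_eq1 eqxx in y_neq1.
    by exists y^-1; rewrite (absV habs) invf_gt1.
  by exists y.
pose q := abs z - 1; have q_gt0 : 0 < q by rewrite subr_gt0.
pose x' := Num.max x 0.
have x'q_ge0 : 0 <= x' / q by rewrite divr_ge0 ?le_max ?lexx ?orbT ?ltW.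
have := archi_boundP x'q_ge0; set n := Num.bound _ => lt_n.
exists (z ^+ n); rewrite (absX habs) -[abs z](subrK 1) addrC -/q.
apply: le_trans (bernoulli_le n (ltW q_gt0)).
have : x' < n%:R * q by rewrite -ltr_pdivrMr.
have : x <= x' by rewrite le_max lexx.
lra.
Qed.

Lemma abs_small_neq0 (d : R) : 0 < d -> exists2 z, z != 0 & abs z < d.
Proof.
move=> d_gt0; have [w le_w] := abs_unbounded (d^-1 + 1).
have w_gt0 : 0 < abs w.
  by apply: lt_le_trans le_w; apply: ltr_wpDl; rewrite ?invr_ge0 ?ltW.
exists w^-1; first by rewrite invr_eq0 -(abs_gt0 habs).
rewrite (absV habs) -[d]invrK ltf_pV2 ?posrE ?invr_gt0 //.
by apply: lt_le_trans le_w; rewrite ltrDl.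
Qed.

Lemma coef_rep_eq0 (e : nat -> K) : coef_rep abs e (fun=> 0) -> e =1 (fun=> 0).
Proof.
move=> he n; apply/eqP/negPn/negP => en_neq0.
have [k ek_neq0 k_min] := ex_minnP (ex_intro (fun n => e n != 0) n en_neq0).
have [B0 B0_ge0 hB0] := null_seq_bounded habs (series_sums_null habs (he 1)).
pose B := B0 + 1; have B_gt0 : 0 < B by rewrite ltr_wpDl.
have le_eB i : abs (e i) <= B.
  by have := hB0 i; rewrite expr1n mulr1 => /le_trans; apply; rewrite lerDl.
pose c := abs (e k); have c_gt0 : 0 < c by rewrite abs_gt0.
have d_gt0 : 0 < Num.min 1 (c / B) by rewrite lt_min ltr01 divr_gt0.
have [z z_neq0] := abs_small_neq0 d_gt0.
pose t := abs z; have t_gt0 : 0 < t by rewrite abs_gt0.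
rewrite lt_min -/t => /andP[t_lt1 t_lt_cB].
have ctk_gt0 : 0 < c * t ^+ k by rewrite mulr_gt0 ?exprn_gt0.
(* For |z| small the k-th term dominates every partial sum past k. *)
have partial_eq M : (k < M)%N -> abs (\sum_(i < M) e i * z ^+ i) = c * t ^+ k.
  move=> lt_kM; rewrite (abs_sum_dominant habs (j := Ordinal lt_kM)) (absM habs) (absX habs) //.
  move=> i /eqP ne_ik; rewrite !(absM habs) !(absX habs) -/t.
  case: (ltngtP i k) => [lt_ik|lt_ki|eq_ik]; last by case: ne_ik; apply: val_inj.
  - have -> : e i = 0 by apply/eqP/negbNE/negP => /k_min; rewrite leqNgt lt_ik.
    by rewrite abs0 // mul0r.
  - apply: le_lt_trans (_ : B * t ^+ k.+1 < c * t ^+ k).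
      apply: ler_pM (abs_ge0 habs _) (exprn_ge0 _ (ltW t_gt0)) (le_eB i) _.
      exact: ler_wiXn2l (ltW t_gt0) (ltW t_lt1) _ _ lt_ki.
    by rewrite exprS mulrA ltr_pM2r ?exprn_gt0 // -ltr_pdivlMl // mulrC.
have [N HN] := he z _ ctk_gt0.
have := HN (maxn N k.+1) (leq_maxl _ _).
by rewrite subr0 partial_eq ?ltxx // leq_max ltnSn orbT.
Qed.

Lemma coef_rep_uniq c1 c2 g : coef_rep abs c1 g -> coef_rep abs c2 g -> c1 = c2.
Proof.
move=> h1 h2; apply: funext => n; apply/eqP; rewrite -subr_eq0; apply/eqP.
apply: (@coef_rep_eq0 (fun n => c1 n - c2 n)) => z.
have := series_sumsB habs (h1 z) (h2 z); rewrite subrr.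
by under eq_fun do rewrite -mulrBl.
Qed.

End Nontrivial.

Section Mu.
Local Open Scope classical_set_scope.
Variables (K : fieldType) (R : realType) (abs : K -> R).
Hypotheses (habs : nonarch_abs abs) (hnt : nontrivial_abs abs).
Variables (g : K -> K) (c : nat -> K) (r : R).
Hypothesis hc : coef_rep abs c g.

Lemma mu_coefE : mu abs r g = sup (range (fun n => abs (c n) * r ^+ n)).
Proof.
rewrite /mu; congr sup; apply/seteqP; split => x.
  by move=> [c' [n [hc' ->]]]; exists n => //; rewrite (coef_rep_uniq habs hnt hc' hc).
by move=> [n _ <-]; exists c, n.
Qed.

Lemma mu_le M : (forall n, abs (c n) * r ^+ n <= M) -> mu abs r g <= M.
Proof.
move=> le_M; rewrite mu_coefE; apply: ge_sup => [|_ [n _ <-]]; last exact: le_M.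
by exists (abs (c 0%N) * r ^+ 0), 0%N.
Qed.

Hypothesis r_ge0 : 0 <= r.

Lemma coef_le_mu n : abs (c n) * r ^+ n <= mu abs r g.
Proof.
have [w le_rw] := abs_unbounded habs hnt r.
have [B _ le_B] := null_seq_bounded habs (series_sums_null habs (hc w)).
have bounded : ubound (range (fun n => abs (c n) * r ^+ n)) B.
  move=> _ [i _ <-]; apply: le_trans (le_B i); rewrite (absM habs) (absX habs).
  by rewrite ler_wpM2l ?(abs_ge0 habs) // lerXn2r // nnegrE (abs_ge0 habs).
rewrite mu_coefE; apply: sup_upper_bound; last by exists n.
by split; [exists (abs (c 0%N) * r ^+ 0), 0%N | exists B].
Qed.

Lemma mu_ge0 : 0 <= mu abs r g.
Proof.
apply: le_trans (coef_le_mu 0).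
by rewrite mulr_ge0 ?(abs_ge0 habs) ?exprn_ge0.
Qed.

End Mu.

Section Composition.
Variables (K : fieldType) (R : realType) (abs : K -> R).
Hypotheses (habs : nonarch_abs abs) (hnt : nontrivial_abs abs).
Hypothesis hcomp : complete_abs abs.
Variables (a b : K).

Definition comp_term (c : nat -> K) n k := c n * a ^+ k * b ^+ (n - k) *+ 'C(n, k).

Definition comp_coefs (c d : nat -> K) :=
  forall k, series_sums abs (fun n => comp_term c n k) (d k).

Lemma comp_term_small c n k : (n < k)%N -> comp_term c n k = 0.
Proof. by move=> lt_nk; rewrite /comp_term bin_small. Qed.

Lemma comp_term_expand c z M n : (n < M)%N ->
  c n * (a * z + b) ^+ n = \sum_(k < M) comp_term c n k * z ^+ k.
Proof.
move=> lt_nM; rewrite addrC exprDn mulr_sumr.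
rewrite (big_ord_widen M (fun i => c n * (b ^+ (n - i) * (a * z) ^+ i *+ 'C(n, i))) lt_nM).
rewrite big_mkcond; apply: eq_bigr => i _; case: ifP => [_|].
  by rewrite /comp_term mulrnAr mulrnAl exprMn; congr (_ *+ _); ring.
by rewrite ltnS leqNgt => /negbFE /comp_term_small ->; rewrite mul0r.
Qed.

Lemma comp_term_bound c n k (rho s : R) : 0 <= rho -> abs a * rho <= s ->
  abs b <= s -> abs (comp_term c n k) * rho ^+ k <= abs (c n) * s ^+ n.
Proof.
move=> rho_ge0 le_as le_bs.
have s_ge0 : 0 <= s := le_trans (abs_ge0 habs b) le_bs.
have [lt_nk|le_kn] := ltnP n k.
  by rewrite comp_term_small // abs0 // mul0r mulr_ge0 ?(abs_ge0 habs) ?exprn_ge0.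
apply: le_trans (_ : abs (c n) * ((abs a * rho) ^+ k * abs b ^+ (n - k)) <= _).
  apply: le_trans (ler_wpM2r (exprn_ge0 k rho_ge0) (abs_mulrn_le habs _ _)) _.
  by rewrite !(absM habs) !(absX habs) exprMn le_eqVlt; apply/orP; left; apply/eqP; ring.
rewrite -[in s ^+ n](subnK le_kn) exprD [s ^+ _ * _]mulrC.
apply: ler_wpM2l; first exact: abs_ge0.
have nneg_le x y : 0 <= x -> x <= y -> forall j, x ^+ j <= y ^+ j.
  by move=> x_ge0 le_xy j; rewrite lerXn2r // nnegrE (le_trans x_ge0).
apply: ler_pM; rewrite ?exprn_ge0 ?mulr_ge0 ?(abs_ge0 habs) //; apply: nneg_le => //.
  by rewrite mulr_ge0 ?(abs_ge0 habs).
exact: abs_ge0.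
Qed.

Variables (g : K -> K) (c : nat -> K).
Hypothesis hc : coef_rep abs c g.

Lemma comp_term_le_coef n k (x w : K) : abs (a * x) <= abs w -> abs b <= abs w ->
  abs (comp_term c n k * x ^+ k) <= abs (c n * w ^+ n).
Proof.
rewrite !(absM habs) !(absX habs) => le_axw le_bw.
exact: comp_term_bound (abs_ge0 habs _) le_axw le_bw.
Qed.

Lemma comp_coefs_exist : exists d, comp_coefs c d.
Proof.
suff /boolp.choice[d hd] : forall k, exists s, series_sums abs (fun n => comp_term c n k) s.
  by exists d.
move=> k; apply: (null_seq_series habs hcomp) => e e_gt0.
have [w] := abs_unbounded habs hnt (Num.max (abs a) (abs b)); rewrite ge_max.
case/andP=> le_aw le_bw.
have [N HN] := series_sums_null habs (hc w) e_gt0; exists N => n le_Nn.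
apply: le_lt_trans (HN n le_Nn).
by have := @comp_term_le_coef n k 1 w; rewrite expr1n !mulr1; apply.
Qed.

Lemma coef_rep_comp d : comp_coefs c d -> coef_rep abs d (fun z => g (a * z + b)).
Proof.
move=> hd z e e_gt0; have e2_gt0 : 0 < e / 2 by rewrite divr_gt0.
have [w] := abs_unbounded habs hnt (Num.max (abs (a * z)) (abs b)); rewrite ge_max.
case/andP=> le_azw le_bw.
have [N1 HN1] := series_sums_null habs (hc w) e2_gt0.
have [N2 HN2] := hc (a * z + b) e2_gt0.
exists (maxn N1 N2) => M; rewrite geq_max => /andP[le_N1M le_N2M].
have partial_comp : \sum_(n < M) c n * (a * z + b) ^+ n =
    \sum_(k < M) \sum_(n < M) comp_term c n k * z ^+ k.
  by rewrite exchange_big; apply: eq_bigr => n _; apply: comp_term_expand.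
have close_partial : abs (\sum_(k < M) d k * z ^+ k -
    \sum_(n < M) c n * (a * z + b) ^+ n) <= e / 2.
  rewrite partial_comp -sumrB; apply: (abs_sum_le habs) => [|k _]; first exact: ltW.
  apply: (series_tail_le habs (series_sumsMr habs (z ^+ k) (hd k))) => [|n le_Mn].
    exact: ltW.
  apply: ltW; apply: le_lt_trans (HN1 n (leq_trans le_N1M le_Mn)).
  exact: comp_term_le_coef.
have lt_e2e : e / 2 < e by rewrite ltr_pdivrMr // ltr_pMr // ltr1n.
apply: le_lt_trans (abs_sub_max habs _ (\sum_(n < M) c n * (a * z + b) ^+ n) _) _.
by rewrite gt_max (le_lt_trans close_partial) // (lt_trans (HN2 M le_N2M)).
Qed.

Lemma comp_coef_le_mu d (r : R) : comp_coefs c d -> 0 < r -> abs a <= 1 ->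
  abs b <= r -> forall k, abs (d k) * r ^+ k <= mu abs r g.
Proof.
move=> hd r_gt0 le_a1 le_br k.
have rk_gt0 : 0 < r ^+ k by rewrite exprn_gt0.
rewrite -ler_pdivlMr //.
have := series_tail_le habs (N := 0) (eps := mu abs r g / r ^+ k) (hd k).
rewrite big_ord0 subr0; apply.
  by rewrite divr_ge0 ?(mu_ge0 habs hnt hc) ?ltW.
move=> n _; rewrite ler_pdivlMr //; apply: le_trans (coef_le_mu habs hnt hc (ltW r_gt0) n).
apply: comp_term_bound => //; first exact: ltW.
exact: ler_piMl (ltW r_gt0) le_a1.
Qed.

End Composition.

Section AffineShift.
Variables (K : fieldType) (R : realType) (abs : K -> R).
Hypotheses (habs : nonarch_abs abs) (hnt : nontrivial_abs abs).
Hypothesis hcomp : complete_abs abs.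
Variables (a b : K).
Local Notation L := (fun z : K => a * z + b).

Lemma coef_rep_DeltaL g c d : coef_rep abs c g -> comp_coefs abs a b c d ->
  coef_rep abs (fun n => d n - c n) (DeltaL L g).
Proof.
move=> hc hd z; have := series_sumsB habs (coef_rep_comp habs hnt hc hd z) (hc z).
by under eq_fun do rewrite -mulrBl.
Qed.

Lemma entire_DeltaLn g n : entire abs g -> entire abs (DeltaLn L n g).
Proof.
move=> hg; elim: n => [//|n [c hc]] /=.
have [d hd] := comp_coefs_exist habs hnt hcomp a b hc.
by exists (fun n => d n - c n); apply: coef_rep_DeltaL hd.
Qed.

Variable r : R.
Hypotheses (r_gt0 : 0 < r) (le_a1 : abs a <= 1) (le_br : abs b <= r).

Lemma mu_comp_le g : entire abs g -> mu abs r (g \o L) <= mu abs r g.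
Proof.
move=> [c hc]; have [d hd] := comp_coefs_exist habs hnt hcomp a b hc.
apply: (mu_le habs hnt (coef_rep_comp habs hnt hc hd)).
exact: (comp_coef_le_mu habs hnt hc hd r_gt0 le_a1 le_br).
Qed.

Lemma mu_DeltaL_le g : entire abs g -> mu abs r (DeltaL L g) <= mu abs r g.
Proof.
move=> [c hc]; have [d hd] := comp_coefs_exist habs hnt hcomp a b hc.
apply: (mu_le habs hnt (coef_rep_DeltaL hc hd)) => n.
have r_ge0 : 0 <= r ^+ n by apply/exprn_ge0/ltW.
apply: le_trans (ler_wpM2r r_ge0 (abs_add_max habs _ _)) _.
rewrite (absN habs) maxr_pMl // ge_max.
by rewrite (comp_coef_le_mu habs hnt hc hd) // (coef_le_mu habs hnt hc) // ltW.
Qed.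

Lemma mu_DeltaLn_le g n : entire abs g -> mu abs r (DeltaLn L n g) <= mu abs r g.
Proof.
move=> hg; elim: n => [//|n IH].
exact: le_trans (mu_DeltaL_le (entire_DeltaLn n hg)) IH.
Qed.

End AffineShift.

Unset Implicit Arguments. Set Strict Implicit.

Theorem lemma2p1 (K : closedFieldType) (R : realType) (abs : K -> R)
  (char0 : [pchar K] =i pred0)
  (habs : nonarch_abs abs) (hnt : nontrivial_abs abs) (hcomp : complete_abs abs)
  (a b : K) (ha0 : a != 0) (ha1 : abs a <= 1)
  (f : K -> K) (hf : entire abs f) (hf0 : exists z, f z != 0)
  (m : nat) (hm : (0 < m)%N) (r : R) (hr : abs b / abs a < r) :
  let L := fun z : K => a * z + b in
  [/\ mu abs r (f \o L) <= mu abs r f,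
      mu_quot abs r (f \o L) f <= 1 &
      mu_quot abs r (DeltaLn L m f) f <= 1].
Proof.
move=> L.
have a_gt0 : 0 < abs a by rewrite (abs_gt0 habs).
have le_br : abs b <= r.
  have le_b_div : abs b <= abs b / abs a.
    by rewrite ler_pdivlMr // ler_piMr ?(abs_ge0 habs).
  exact: ltW (le_lt_trans le_b_div hr).
have r_gt0 : 0 < r by apply: le_lt_trans hr; rewrite divr_ge0 ?(abs_ge0 habs).
have [c hc] := hf.
(* If [mu abs r f = 0] the quotient is the junk value [_ / 0 = 0], so [hf0] is not needed. *)
have quot_le1 g : mu abs r g <= mu abs r f -> mu_quot abs r g f <= 1.
  move=> le_gf; rewrite /mu_quot.
  have [->|mu_f_neq0] := eqVneq (mu abs r f) 0; first by rewrite invr0 mulr0 ler01.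
  rewrite ler_pdivrMr ?mul1r // lt_def mu_f_neq0.
  exact: (mu_ge0 habs hnt hc (ltW r_gt0)).
have le_comp : mu abs r (f \o L) <= mu abs r f := mu_comp_le habs hnt hcomp r_gt0 ha1 le_br hf.
split=> //; apply: quot_le1 => //.
exact: (mu_DeltaLn_le habs hnt hcomp r_gt0 ha1 le_br m hf).
Qed.
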